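(* Let $(\mathbf k((G)),l)$ be a series field with prelogarithmic section and let $\psi$ be a morphism from $(\mathbf k((G)),l)$ to itself which is contracting, i.e. $\psi(g)<g$ for all $g\in G$ with $g>1$. Then $\psi^{EL}$ is a contraction, i.e. $\psi^{EL}(g)<g$ for all $g\in G^{EL}$ with $g>1$.
   Context: Let $\mathbf k$ be an ordered field and $(G,\cdot,<)$ a totally ordered abelian group (written multiplicatively). $\mathbf k((G))$ denotes the field of generalized power series $\alpha=\sum_{g\in G}\alpha(g)\,g$ ($\alpha(g)\in\mathbf k$) whose support is anti-well-ordered, with the usual operations, canonical valuation $v(\alpha)=\max\operatorname{supp}\alpha$ and ordering $\alpha>0$ iff $\alpha(v(\alpha))>0$; $\mathbf k$ and $G$ are identified with subsets of $\mathbf k((G))$. For $S\subseteq G$, $\mathbf k((S))=\{\alpha:\operatorname{supp}\alpha\subseteq S\}$; $G^{>1}=\{g\in G:g>1\}$. A prelogarithmic section is an order-preserving group embedding $l:(G,\cdot)\to(\mathbf k((G^{>1})),+)$; fix an order-preserving group isomorphism $\log:\mathbf k^{>0}\to\mathbf k$. Exponential extension: $G^\#$ is the ordered abelian group of formal symbols $e(\alpha)$, $\alpha\in\mathbf k((G^{>1}))$, with $e(\alpha)e(\beta)=e(\alpha+\beta)$, $e(\alpha)<e(\beta)\iff\alpha<\beta$, and $e(l(g))$ identified with $g\in G$; $l^\#(e(\alpha))=\alpha$ is a prelogarithmic section of $\mathbf k((G^\#))$ extending $l$. Iterating gives $G^{\#n}$, $l^{\#n}$; $\mathbf k((G))^{EL}=\bigcup_n\mathbf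 k((G^{\#n}))$ with logarithm $\mathrm{Log}$ (union of the prelogarithms of the $l^{\#n}$), $G^{EL}=\bigcup_nG^{\#n}$. An order-preserving group embedding $\psi:G\to G$, extended to $\mathbf k((G))$ by $\psi(\sum a_gg)=\sum a_g\psi(g)$, is a morphism of $(\mathbf k((G)),l)$ to itself if $\psi\circ l=l\circ\psi$ on $G$. It induces $\psi^\#=(l^\#)^{-1}\circ\psi\circ l^\#:G^\#\to G^\#$ (a morphism extending $\psi$); iterating gives $\psi^{\#n}$ and $\psi^{EL}=\bigcup_n\psi^{\#n}$. *)

From HB Require Import structures.
From mathcomp Require Import all_boot all_order all_algebra.
From Stdlib Require Import ClassicalEpsilon.
Import Order.TTheory GRing.Theory Num.Theory.
Local Open Scope ring_scope.

(* A (candidate) ordered abelian group, written multiplicatively, given as a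
   carrier type with a membership predicate [ogmem] (the group is the set of
   members), a product, a unit and a strict order. *)
Record PreOG := {
  car : Type;
  ogmem : car -> Prop;
  gmul : car -> car -> car;
  gone : car;
  glt : car -> car -> Prop }.


Definition is_oag (G : PreOG) : Prop :=
  ogmem G (gone G) /\
  (forall x y, ogmem G x -> ogmem G y -> ogmem G (gmul G x y)) /\
  (forall x y z, ogmem G x -> ogmem G y -> ogmem G z ->
     gmul G x (gmul G y z) = gmul G (gmul G x y) z) /\
  (forall x y, ogmem G x -> ogmem G y -> gmul G x y = gmul G y x) /\
  (forall x, ogmem G x -> gmul G (gone G) x = x) /\
  (forall x, ogmem G x -> exists y, ogmem G y /\ gmul G x y = gone G) /\
  (forall x, ogmem G x -> ~ glt G x x) /\
  (forall x y z, ogmem G x -> ogmem G y -> ogmem G z ->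
     glt G x y -> glt G y z -> glt G x z) /\
  (forall x y, ogmem G x -> ogmem G y -> glt G x y \/ x = y \/ glt G y x) /\
  (forall x y z, ogmem G x -> ogmem G y -> ogmem G z ->
     glt G x y -> glt G (gmul G x z) (gmul G y z)).

Definition gt1 (G : PreOG) (g : car G) : Prop := ogmem G g /\ glt G (gone G) g.

Definition anti_wo (G : PreOG) (P : car G -> Prop) : Prop :=
  forall Q : car G -> Prop, (forall x, Q x -> P x) -> (exists x, Q x) ->
  exists m, Q m /\ forall x, Q x -> ~ glt G m x.

(* a : G -> k is an element of k((S)): anti-well-ordered support inside S. *)
Definition is_series {k : realFieldType} (G : PreOG) (S : car G -> Prop)
  (a : car G -> k) : Prop :=
  (forall g, a g <> 0 -> S g) /\ anti_wo G (fun g => a g <> 0).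

(* Order of k((G)): a < b iff the leading coefficient of b - a is positive,
   i.e. b - a has coefficient > 0 at some g and vanishes above g. *)
Definition series_lt {k : realFieldType} (G : PreOG) (a b : car G -> k) : Prop :=
  exists g, ogmem G g /\ (a g < b g) /\
    forall h, ogmem G h -> glt G g h -> a h = b h.

(* Push-forward of a series along a map f injective on the members:
   sum a_x x  |->  sum a_x f(x). *)
Definition push {k : realFieldType} {A B : Type} (mA : A -> Prop) (f : A -> B)
  (a : A -> k) (y : B) : k :=
  match excluded_middle_informative (exists x, mA x /\ f x = y) with
  | left H => a (proj1_sig (constructive_indefinite_description _ H))
  | right _ => 0
  end.

Definition ext {k : realFieldType} (G : PreOG) (psi : car G -> car G)
  (a : car G -> k) : car G -> k := push (ogmem G) psi a.

Definition is_prelog {k : realFieldType} (G : PreOG) (l : car G -> car G -> k) : Prop :=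
  (forall g, ogmem G g -> is_series G (gt1 G) (l g)) /\
  (forall g h, ogmem G g -> ogmem G h ->
     l (gmul G g h) = (fun x => l g x + l h x)) /\
  (forall g h, ogmem G g -> ogmem G h -> glt G g h -> series_lt G (l g) (l h)).

Definition is_og_embedding (G : PreOG) (psi : car G -> car G) : Prop :=
  (forall g, ogmem G g -> ogmem G (psi g)) /\
  (forall g h, ogmem G g -> ogmem G h -> psi (gmul G g h) = gmul G (psi g) (psi h)) /\
  (forall g h, ogmem G g -> ogmem G h -> glt G g h -> glt G (psi g) (psi h)).

Definition is_morphism {k : realFieldType} (G : PreOG) (l : car G -> car G -> k)
  (psi : car G -> car G) : Prop :=
  is_og_embedding G psi /\
  (forall g, ogmem G g -> ext G psi (l g) = l (psi g)).

Definition contracting (G : PreOG) (psi : car G -> car G) : Prop :=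
  forall g, ogmem G g -> glt G (gone G) g -> glt G (psi g) g.

(* G^#: the ordered group of symbols e(alpha), alpha in k((G^{>1})),
   represented by alpha itself: e(a) e(b) = e(a+b), e(a) < e(b) iff a < b. *)
Definition sharp_group (k : realFieldType) (G : PreOG) : PreOG :=
  {| car := car G -> k;
     ogmem := is_series G (gt1 G);
     gmul := fun a b x => a x + b x;
     gone := fun _ => 0;
     glt := series_lt G |}.

Record Lev (k : realFieldType) := { lvG : PreOG; lvl : car lvG -> car lvG -> k }.

(* (G, l) |-> (G^#, l^#); g in G is identified with e(l g), and
   l^#(e(alpha)) = alpha, viewed in k((G^#)) via this identification. *)
Definition sharp {k : realFieldType} (L : Lev k) : Lev k :=
  {| lvG := sharp_group k (lvG k L);
     lvl := fun a => push (ogmem (lvG k L)) (@lvl k L) a |}.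

Fixpoint tower {k : realFieldType} (G : PreOG) (l : car G -> car G -> k) (n : nat)
  : Lev k :=
  match n with
  | O => {| lvG := G; lvl := l |}
  | S m => sharp (tower G l m)
  end.

Fixpoint psi_n {k : realFieldType} (G : PreOG) (l : car G -> car G -> k)
  (psi : car G -> car G) (n : nat) : car (lvG k (tower G l n)) -> car (lvG k (tower G l n)) :=
  match n return car (lvG k (tower G l n)) -> car (lvG k (tower G l n)) with
  | O => psi
  | S m => fun a => push (ogmem (lvG k (tower G l m))) (psi_n G l psi m) a
  end.

From mathcomp Require Import all_boot all_order all_algebra.
From Stdlib Require Import Classical ClassicalEpsilon FunctionalExtensionality.
Import Order.TTheory GRing.Theory Num.Theory.

Set Implicit Arguments.
Unset Strict Implicit.
Local Open Scope ring_scope.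

(* We package this
   as the invariant [contraction H p] and show that it passes from a group H
   to its exponential extension H^# = k((H^{>1})), with p replaced by its
   coefficient-wise extension [push p].  The key computation is classical:
   if alpha > 0 in k((H^{>1})) has leading monomial g > 1, then p(alpha) has
   all its monomials at most p(g) < g, so p(alpha) < alpha. *)

Record strict_total_order (H : PreOG) : Prop := {
  glt_irr : forall x, ogmem H x -> ~ glt H x x;
  glt_trans : forall x y z, ogmem H x -> ogmem H y -> ogmem H z ->
    glt H x y -> glt H y z -> glt H x z;
  glt_tri : forall x y, ogmem H x -> ogmem H y ->
    glt H x y \/ x = y \/ glt H y x }.

Record contraction (H : PreOG) (p : car H -> car H) : Prop := {
  ct_order : strict_total_order H;
  ct_one_mem : ogmem H (gone H);
  ct_mem : forall x, ogmem H x -> ogmem H (p x);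
  ct_mono : forall x y, ogmem H x -> ogmem H y -> glt H x y -> glt H (p x) (p y);
  ct_fix_one : p (gone H) = gone H;
  ct_contract : forall x, ogmem H x -> glt H (gone H) x -> glt H (p x) x }.
Arguments contraction : clear implicits.

Section StrictTotalOrder.
Variable H : PreOG.
Hypothesis HT : strict_total_order H.

Lemma glt_asym x y : ogmem H x -> ogmem H y -> glt H x y -> ~ glt H y x.
Proof.
by move=> Mx My Lxy Lyx; apply: (glt_irr HT Mx); apply: (glt_trans HT Mx My Mx).
Qed.

Lemma nlt_lt_trans x y z : ogmem H x -> ogmem H y -> ogmem H z ->
  ~ glt H x y -> glt H x z -> glt H y z.
Proof.
move=> Mx My Mz Nxy Lxz.
case: (glt_tri HT Mx My) => [//|[<- //|Lyx]].
exact: (glt_trans HT My Mx Mz).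
Qed.

(* A union of two anti-well-ordered sets of members is anti-well-ordered;
   this is what makes series have a well-defined first difference. *)
Lemma anti_wo_union (P1 P2 : car H -> Prop) :
  (forall x, P1 x -> ogmem H x) -> (forall x, P2 x -> ogmem H x) ->
  anti_wo H P1 -> anti_wo H P2 -> anti_wo H (fun x => P1 x \/ P2 x).
Proof.
move=> M1 M2 A1 A2 Q sQ neQ.
have [E2|N2] := classic (exists x, Q x /\ P2 x); last first.
  apply: A1 => // x Qx; case: (sQ x Qx) => // P2x.
  by case: N2; exists x.
have [E1|N1] := classic (exists x, Q x /\ P1 x); last first.
  apply: A2 => // x Qx; case: (sQ x Qx) => // P1x.
  by case: N1; exists x.
have [m1 [[Qm1 Pm1] max1]] := A1 _ (fun x h => proj2 h) E1.
have [m2 [[Qm2 Pm2] max2]] := A2 _ (fun x h => proj2 h) E2.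
have Mm1 := M1 _ Pm1; have Mm2 := M2 _ Pm2.
have [m [Qm [Mm [N1m N2m]]]] :
    exists m, Q m /\ ogmem H m /\ ~ glt H m m1 /\ ~ glt H m m2.
  case: (glt_tri HT Mm1 Mm2) => [L|[E|L]].
  - exists m2; do 3!split => //; first exact: glt_asym Mm1 Mm2 L.
    exact: (glt_irr HT Mm2).
  - by subst m2; exists m1; do 3!split => //; exact: (glt_irr HT Mm1).
  - exists m1; do 3!split => //; first exact: (glt_irr HT Mm1).
    exact: glt_asym Mm2 Mm1 L.
exists m; split => // x Qx Lmx.
case: (sQ x Qx) => [P1x|P2x].
- by apply: (max1 x (conj Qx P1x)); apply: (nlt_lt_trans Mm Mm1 (M1 _ P1x)).
- by apply: (max2 x (conj Qx P2x)); apply: (nlt_lt_trans Mm Mm2 (M2 _ P2x)).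
Qed.

End StrictTotalOrder.

Lemma push_cases (k : realFieldType) (A B : Type) (mA : A -> Prop) (f : A -> B)
  (y : B) :
  (exists x, mA x /\ f x = y /\ forall a : A -> k, push mA f a y = a x) \/
  ((~ exists x, mA x /\ f x = y) /\ forall a : A -> k, push mA f a y = 0).
Proof.
rewrite /push; case: excluded_middle_informative => [E|N]; last by right.
left; exists (proj1_sig (constructive_indefinite_description _ E)).
by have [? ?] := proj2_sig (constructive_indefinite_description _ E).
Qed.
Arguments push_cases k {A B}.

Lemma push_zero (k : realFieldType) (A B : Type) (mA : A -> Prop) (f : A -> B) :
  push mA f (fun _ => 0 : k) = (fun _ => 0).
Proof.
apply: functional_extensionality => y.
by case: (push_cases k mA f y) => [[x [_ [_ ->]]]|[_ ->]].
Qed.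

Section MonotoneMap.
Variables (k : realFieldType) (H : PreOG) (p : car H -> car H).
Hypothesis HT : strict_total_order H.
Hypothesis p_mem : forall x, ogmem H x -> ogmem H (p x).
Hypothesis p_mono : forall x y, ogmem H x -> ogmem H y ->
  glt H x y -> glt H (p x) (p y).

Lemma mono_reflect x y : ogmem H x -> ogmem H y ->
  glt H (p x) (p y) -> glt H x y.
Proof.
move=> Mx My L; case: (glt_tri HT Mx My) => [//|[E|Lyx]].
- by subst y; case: (glt_irr HT (p_mem Mx) L).
- by case: (glt_asym HT (p_mem Mx) (p_mem My) L); apply: p_mono.
Qed.

Lemma mono_inj x y : ogmem H x -> ogmem H y -> p x = p y -> x = y.
Proof.
move=> Mx My E; case: (glt_tri HT Mx My) => [L|[//|L]].
- by case: (glt_irr HT (p_mem My)); rewrite -{1}E; apply: p_mono.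
- by case: (glt_irr HT (p_mem Mx)); rewrite {1}E; apply: p_mono.
Qed.

Lemma push_image (a : car H -> k) x : ogmem H x -> push (ogmem H) p a (p x) = a x.
Proof.
move=> Mx; case: (push_cases k (ogmem H) p (p x)) => [[x' [Mx' [E ->]]]|[N _]].
- by rewrite (mono_inj Mx' Mx E).
- by case: N; exists x.
Qed.

Lemma push_support (a : car H -> k) y : push (ogmem H) p a y <> 0 ->
  exists x, ogmem H x /\ p x = y /\ a x <> 0.
Proof.
case: (push_cases k (ogmem H) p y) => [[x [Mx [E ->]]]|[_ ->]] // ax.
by exists x.
Qed.

Lemma push_is_series (S S' : car H -> Prop) (a : car H -> k) :
  (forall x, ogmem H x -> S x -> S' (p x)) ->
  is_series H S a -> is_series H S' (push (ogmem H) p a).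
Proof.
move=> pS [suppS awo]; split.
  by move=> y /push_support [x [Mx [<- ax]]]; apply: pS Mx (suppS x ax).
move=> Q sQ [y0 Qy0].
have [x0 [Mx0 [px0 ax0]]] := push_support (sQ y0 Qy0); subst y0.
have [m [[Mm [am Qm]] maxm]] :=
  awo (fun x => ogmem H x /\ a x <> 0 /\ Q (p x)) (fun x h => proj1 (proj2 h))
      (ex_intro _ x0 (conj Mx0 (conj ax0 Qy0))).
exists (p m); split => // y Qy L.
have [x [Mx [E ax]]] := push_support (sQ y Qy); subst y.
exact: (maxm x (conj Mx (conj ax Qy)) (mono_reflect Mm Mx L)).
Qed.

(* p is strictly increasing on series: the first difference of alpha and
   beta at g becomes a first difference of p(alpha) and p(beta) at p(g). *)
Lemma push_mono (a b : car H -> k) : series_lt H a b ->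
  series_lt H (push (ogmem H) p a) (push (ogmem H) p b).
Proof.
move=> [g [Mg [Lg Eg]]]; exists (p g); split; first exact: p_mem.
rewrite !push_image //; split => // h Mh Lh.
case: (push_cases k (ogmem H) p h) => [[x [Mx [E Ex]]]|[_ Ex]]; rewrite !Ex //.
by rewrite -E in Lh; exact: Eg x Mx (mono_reflect Mg Mx Lh).
Qed.

(* The key computation: if p contracts the support of alpha > 0, then all
   monomials of p(alpha) lie strictly below the leading monomial g of alpha,
   hence p(alpha) < alpha, witnessed at g. *)
Lemma push_contracting (a : car H -> k) :
  (forall x, ogmem H x -> a x <> 0 -> glt H (p x) x) ->
  series_lt H (fun _ => 0) a -> series_lt H (push (ogmem H) p a) a.
Proof.
move=> contr [g [Mg [Lg Eg]]].
have ag : a g <> 0 by move=> E; rewrite E ltxx in Lg.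
have Lpg := contr g Mg ag.
have vanish : forall h, ogmem H h -> ~ glt H h g -> push (ogmem H) p a h = 0.
  move=> h Mh Nhg; apply: NNPP => /push_support [x [Mx [E ax]]]; subst h.
  have Lxg : glt H x g.
    case: (glt_tri HT Mx Mg) => [//|[E|Lgx]]; first by subst x.
    by case: ax; rewrite (Eg x Mx Lgx).
  by apply: Nhg; exact: (glt_trans HT (p_mem Mx) (p_mem Mg) Mg (p_mono Mx Mg Lxg) Lpg).
exists g; split => //; split; first by rewrite vanish //; exact: (glt_irr HT Mg).
move=> h Mh Lgh; rewrite vanish //; first by rewrite (Eg h Mh Lgh).
exact: (glt_asym HT Mg Mh Lgh).
Qed.

End MonotoneMap.

Section SeriesOrder.
Variables (k : realFieldType) (H : PreOG).
Hypothesis HT : strict_total_order H.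

Lemma zero_is_series (S : car H -> Prop) : is_series H S (fun _ => 0 : k).
Proof. by split=> [g /(_ erefl)|Q sQ [x Qx]] //; case: (sQ x Qx). Qed.

Lemma series_lt_irr (a : car H -> k) : ~ series_lt H a a.
Proof. by move=> [g [_ [L _]]]; rewrite ltxx in L. Qed.

Lemma series_lt_trans (a b c : car H -> k) :
  series_lt H a b -> series_lt H b c -> series_lt H a c.
Proof.
move=> [g1 [M1 [L1 E1]]] [g2 [M2 [L2 E2]]].
case: (glt_tri HT M1 M2) => [L|[E|L]].
- exists g2; split => //; split; first by rewrite E1.
  by move=> h Mh Lh; rewrite E1 ?E2 //; exact: (glt_trans HT M1 M2 Mh L Lh).
- subst g2; exists g1; split => //; split; first exact: lt_trans L2.
  by move=> h Mh Lh; rewrite E1 ?E2.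
- exists g1; split => //; split; first by rewrite -E2.
  by move=> h Mh Lh; rewrite E1 ?E2 //; exact: (glt_trans HT M2 M1 Mh L Lh).
Qed.

Lemma first_difference (S : car H -> Prop) (a b : car H -> k) :
  (forall x, S x -> ogmem H x) -> is_series H S a -> is_series H S b -> a <> b ->
  exists m, ogmem H m /\ a m <> b m /\
    forall h, ogmem H h -> glt H m h -> a h = b h.
Proof.
move=> SM [Sa Aa] [Sb Ab] ab.
have [x0 Dx0] : exists x, a x <> b x.
  apply: NNPP => N; apply: ab; apply: functional_extensionality => x.
  by apply: NNPP => Dx; apply: N; exists x.
have suppD : forall x, a x <> b x -> a x <> 0 \/ b x <> 0.
  move=> x Dx; apply: NNPP => /not_or_and [/NNPP ax /NNPP bx].
  by apply: Dx; rewrite ax bx.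
have [m [Dm maxm]] :=
  anti_wo_union HT (fun x h => SM x (Sa x h)) (fun x h => SM x (Sb x h)) Aa Ab
    suppD (ex_intro _ x0 Dx0).
exists m; split; first by case: (suppD m Dm) => [/Sa|/Sb]; apply: SM.
split=> // h _ Lmh; apply: NNPP => Dh; exact: maxm h Dh Lmh.
Qed.

Lemma series_lt_total (S : car H -> Prop) (a b : car H -> k) :
  (forall x, S x -> ogmem H x) -> is_series H S a -> is_series H S b ->
  series_lt H a b \/ a = b \/ series_lt H b a.
Proof.
move=> SM Sa Sb; have [->|ab] := classic (a = b); first by right; left.
have [m [Mm [Dm Em]]] := first_difference SM Sa Sb ab.
case: (ltgtP (a m) (b m)) => [L|L|E]; last by case: Dm.
- by left; exists m.
- by right; right; exists m; split=> //; split=> // h Mh Lh; rewrite Em.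
Qed.

End SeriesOrder.

Lemma sharp_contraction (k : realFieldType) (H : PreOG) (p : car H -> car H) :
  contraction H p -> contraction (sharp_group k H) (push (ogmem H) p).
Proof.
case=> HT one_mem p_mem p_mono p_one p_contr.
have gt1_mem : forall x, gt1 H x -> ogmem H x by move=> x [].
have p_gt1 : forall x, ogmem H x -> gt1 H x -> gt1 H (p x).
  move=> x Mx [_ Lx]; split; first exact: p_mem.
  by rewrite -p_one; apply: p_mono.
split => /=.
- split=> [a _|a b c _ _ _|a b Ma Mb].
  + exact: series_lt_irr.
  + exact: series_lt_trans.
  + exact: (series_lt_total HT gt1_mem Ma Mb).
- exact: zero_is_series.
- by move=> a; apply: push_is_series.
- by move=> a b _ _; apply: push_mono.
- exact: push_zero.
- move=> a [suppa _] pos; apply: (push_contracting HT p_mem p_mono _ pos).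
  by move=> x Mx /suppa [_]; apply: p_contr.
Qed.

(* A contracting morphism of (k((G)), l) satisfies the invariant; the only
   non-immediate field, psi(1) = 1, holds for any group homomorphism. *)
Lemma morphism_contraction (k : realFieldType) (G : PreOG)
  (l : car G -> car G -> k) (psi : car G -> car G) :
  is_oag G -> is_morphism G l psi -> contracting G psi -> contraction G psi.
Proof.
move=> [one_mem [_ [assoc [comm [one_mul [inv [irr [tr [tri _]]]]]]]]].
move=> [[psi_mem [psi_mul psi_mono]] _] contr.
split => //.
have M1 := psi_mem _ one_mem.
have idem : gmul G (psi (gone G)) (psi (gone G)) = psi (gone G).
  by rewrite -psi_mul // one_mul.
have [y [My Ey]] := inv _ M1.
by rewrite -[in RHS]Ey -[in RHS]idem -assoc // Ey // comm // one_mul.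
Qed.

Theorem proposition7 (k : realFieldType) (G : PreOG) (l : car G -> car G -> k)
  (psi : car G -> car G) :
  is_oag G -> is_prelog G l -> is_morphism G l psi -> contracting G psi ->
  forall (n : nat) (g : car (lvG k (tower G l n))),
    ogmem (lvG k (tower G l n)) g ->
    glt (lvG k (tower G l n)) (gone (lvG k (tower G l n))) g ->
    glt (lvG k (tower G l n)) (psi_n G l psi n g) g.
Proof.
move=> HG _ Hpsi Hcontr n.
have level_contraction : contraction (lvG k (tower G l n)) (psi_n G l psi n).
  elim: n => [|n IH]; first exact: morphism_contraction HG Hpsi Hcontr.
  exact: sharp_contraction IH.
exact: ct_contract level_contraction.
Qed.
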